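(* Let $(\tilde\theta_n)_{n\ge0}$ be a sequence in $(0,\infty)^d$ satisfying, for some sequence $(X_n)_{n\ge1}$ in $\mathsf X$ and some sequence $(\gamma_n)_{n\ge1}$ of positive stepsizes, the recurrence $\tilde\theta_{n+1}(i)=\tilde\theta_n(i)\big(1+\gamma_{n+1}\frac{\rho(\theta_n(i))}{\theta_n(i)}\mathbf 1_{\mathsf X_i}(X_{n+1})\big)$ for all $i$ and $n\ge0$, where $\theta_n=\tilde\theta_n/\sum_{j=1}^d\tilde\theta_n(j)$. Then $$\theta_{n+1}=\theta_n+\gamma_{n+1}H(X_{n+1},\theta_n)+\gamma_{n+1}\Lambda_{n+1},$$ where $(\Lambda_n)_{n\ge1}$ is an $\mathbb R^d$-valued sequence satisfying $\sup_{n\ge0}\frac{|\Lambda_{n+1}|}{\gamma_{n+1}}\le\sqrt2\,\big(\sup_{(0,1)}\rho\big)^2$ (almost surely, when the sequences are random).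
   Context: $\mathsf X$ is a set partitioned into disjoint measurable strata $\mathsf X_1,\dots,\mathsf X_d$, with $I(x)=i$ iff $x\in\mathsf X_i$; $\Theta=\{\theta\in(0,1)^d:\sum_i\theta(i)=1\}$; $\rho:(0,1)\to(0,\infty)$ is measurable. The function $H:\mathsf X\times\Theta\to\mathbb R^d$ has components $H_i(x,\theta)=\rho(\theta(i))\mathbf 1_{\mathsf X_i}(x)-\theta(i)\rho(\theta(I(x)))$. $|\cdot|$ is the Euclidean norm. *)

From HB Require Import structures.
From mathcomp Require Import all_boot all_order all_algebra.
From mathcomp Require Import all_classical all_reals all_analysis.
Set Implicit Arguments. Unset Strict Implicit. Unset Printing Implicit Defensive.
Import Order.TTheory GRing.Theory Num.Theory.
Local Open Scope ring_scope.

Definition eucl_norm (R : realType) (d : nat) (v : 'I_d -> R) : R :=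
  Num.sqrt (\sum_(i < d) v i ^+ 2).

Definition normalize (R : realType) (d : nat) (t : 'I_d -> R) : 'I_d -> R :=
  fun i => t i / \sum_(j < d) t j.

(* Indicator 1_{X_i}(x), where X_i = I^{-1}(i). *)
Definition strat_ind (R : realType) (T : Type) (d : nat) (I : T -> 'I_d)
  (i : 'I_d) (x : T) : R := (I x == i)%:R.

Definition Hfun (R : realType) (T : Type) (d : nat) (I : T -> 'I_d)
  (rho : R -> R) (x : T) (th : 'I_d -> R) : 'I_d -> R :=
  fun i => rho (th i) * strat_ind R I i x - th i * rho (th (I x)).

From HB Require Import structures.
From mathcomp Require Import all_boot all_order all_algebra.
From mathcomp Require Import all_classical all_reals all_analysis.
From mathcomp.algebra_tactics Require Import ring lra.
Set Implicit Arguments. Unset Strict Implicit. Unset Printing Implicit Defensive.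
Import Order.TTheory GRing.Theory Num.Theory.
Local Open Scope classical_set_scope.
Local Open Scope ring_scope.

(* With [k := I x] and [r := rho(theta(k))], the update multiplies only the
   k-th weight, adding [gamma r S] to it (S the total weight); hence
   [theta' = (theta + gamma r e_k) / (1 + gamma r)], while
   [H(x, theta) = r (e_k - theta)].  The remainder is therefore exactly
   [Lambda = - gamma r^2 / (1 + gamma r) (e_k - theta)], and
   [|e_k - theta| <= sqrt 2] for any probability vector theta. *)

Lemma exists_ord_neq (n : nat) (k : 'I_n) : (1 < n)%N -> exists j : 'I_n, j != k.
Proof. by case: n k => [|[|n]] // k _; exists (lift k ord0); rewrite eq_sym neq_lift. Qed.

Lemma sum_indicator (R : nzRingType) (n : nat) (k : 'I_n) :
  \sum_(i < n) (k == i)%:R = 1 :> R.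
Proof.
by rewrite (bigD1 k) //= eqxx big1 ?addr0 // => i; rewrite eq_sym => /negbTE ->.
Qed.

Lemma eucl_normZ (R : realType) (d : nat) (c : R) (v : 'I_d -> R) :
  eucl_norm (fun i => c * v i) = `|c| * eucl_norm v.
Proof.
rewrite /eucl_norm; under eq_bigr do rewrite exprMn.
by rewrite -mulr_sumr sqrtrM ?sqr_ge0 // sqrtr_sqr.
Qed.

Lemma sqr_indicator_sub_le (R : realFieldType) (b : bool) (p : R) :
  0 <= p <= 1 -> (b%:R - p) ^+ 2 <= b%:R + p.
Proof. by case: b => /andP[p0 p1] /=; nra. Qed.

Lemma eucl_norm_indicator_sub_le (R : realType) (d : nat) (p : 'I_d -> R)
    (k : 'I_d) :
  (forall i, 0 <= p i) -> \sum_(i < d) p i = 1 ->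
  eucl_norm (fun i => (k == i)%:R - p i) <= Num.sqrt 2.
Proof.
move=> p_ge0 p_sum1.
have p_le1 i : p i <= 1.
  rewrite -p_sum1 (bigD1 i) //= lerDl.
  exact: sumr_ge0.
rewrite /eucl_norm ler_sqrt //.
apply: le_trans (_ : _ <= \sum_(i < d) ((k == i)%:R + p i)) _.
  by apply: ler_sum => i _; rewrite sqr_indicator_sub_le // p_ge0 p_le1.
by rewrite big_split /= sum_indicator p_sum1.
Qed.

Section Normalize.
Variables (R : realType) (d : nat) (t : 'I_d -> R).
Hypothesis t_gt0 : forall i, 0 < t i.

(* [k] only witnesses [0 < d]: the empty sum is [0]. *)
Lemma sum_gt0 (k : 'I_d) : 0 < \sum_(j < d) t j.
Proof.
rewrite (bigD1 k) //=; apply: ltr_wpDr (t_gt0 k).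
by apply: sumr_ge0 => j _; exact: ltW.
Qed.

Lemma normalize_gt0 (i : 'I_d) : 0 < normalize t i.
Proof. exact: divr_gt0 (t_gt0 i) (sum_gt0 i). Qed.

Lemma normalize_lt1 (k : 'I_d) : (1 < d)%N -> normalize t k < 1.
Proof.
move=> /(exists_ord_neq k) [j jk].
rewrite /normalize ltr_pdivrMr ?sum_gt0 // mul1r (bigD1 k) //= ltrDl.
rewrite (bigD1 j) //=; apply: ltr_wpDr (t_gt0 j).
by apply: sumr_ge0 => i _; exact: ltW.
Qed.

Lemma sum_normalize (k : 'I_d) : \sum_(i < d) normalize t i = 1.
Proof. by rewrite -mulr_suml divff // gt_eqF ?sum_gt0. Qed.

Lemma normalize_bump (k : 'I_d) (a : R) (i : 'I_d) : 1 + a != 0 ->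
  normalize (fun j => t j + a * (\sum_(l < d) t l) * (k == j)%:R) i
  = (normalize t i + a * (k == i)%:R) / (1 + a).
Proof.
move=> a1; rewrite {1}/normalize big_split /= -mulr_sumr sum_indicator.
have S0 : \sum_(l < d) t l != 0 by rewrite gt_eqF ?sum_gt0.
rewrite /normalize; field.
by rewrite a1 S0 -{1}(mul1r (\sum_(l < d) t l)) -mulrDl mulf_neq0.
Qed.

End Normalize.

Definition stratified_remainder (R : realType) (T : Type) (d : nat)
    (I : T -> 'I_d) (rho : R -> R) (g : R) (x : T) (th : 'I_d -> R) :
    'I_d -> R :=
  fun i => - (g * rho (th (I x)) ^+ 2 / (1 + g * rho (th (I x))))
           * (strat_ind R I i x - th i).

Section StratifiedStep.
Variables (R : realType) (T : Type) (d : nat) (I : T -> 'I_d) (rho : R -> R).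

Lemma HfunE (x : T) (th : 'I_d -> R) (i : 'I_d) :
  Hfun I rho x th i = rho (th (I x)) * (strat_ind R I i x - th i).
Proof.
by rewrite /Hfun /strat_ind; case: eqP => [->|_] /=; ring.
Qed.

Lemma stratified_update_bump (t : 'I_d -> R) (g : R) (x : T) (i : 'I_d) :
  (forall j, 0 < t j) ->
  t i * (1 + g * (rho (normalize t i) / normalize t i) * strat_ind R I i x)
  = t i + g * rho (normalize t (I x)) * (\sum_(l < d) t l) * (I x == i)%:R.
Proof.
move=> t_gt0; rewrite /strat_ind; case: eqP => [<-|_] /=; last by ring.
have S0 : \sum_(l < d) t l != 0 by rewrite gt_eqF ?(sum_gt0 t_gt0 (I x)).
by rewrite /normalize; field; rewrite S0 (gt_eqF (t_gt0 (I x))).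
Qed.

Lemma normalize_stratified_step (t t' : 'I_d -> R) (g : R) (x : T) :
  (forall j, 0 < t j) -> 0 < g -> 0 <= rho (normalize t (I x)) ->
  (forall j, t' j = t j * (1 + g * (rho (normalize t j) / normalize t j)
                                  * strat_ind R I j x)) ->
  forall i, normalize t' i = normalize t i + g * Hfun I rho x (normalize t) i
                   + g * stratified_remainder I rho g x (normalize t) i.
Proof.
move=> t_gt0 g_gt0 r_ge0 t'E i.
have gr_gt0 : 0 < 1 + g * rho (normalize t (I x)) by nra.
have -> : t' = fun j => t j + g * rho (normalize t (I x))
                               * (\sum_(l < d) t l) * (I x == j)%:R.
  by apply/funext => j; rewrite t'E stratified_update_bump.
rewrite normalize_bump ?(gt_eqF gr_gt0) // HfunE.
by rewrite /stratified_remainder /strat_ind; field; rewrite (gt_eqF gr_gt0).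
Qed.

Lemma eucl_norm_stratified_remainder_le (th : 'I_d -> R) (g : R) (x : T) :
  (forall i, 0 <= th i) -> \sum_(i < d) th i = 1 ->
  0 < g -> 0 <= rho (th (I x)) ->
  eucl_norm (stratified_remainder I rho g x th) / g
  <= Num.sqrt 2 * rho (th (I x)) ^+ 2.
Proof.
move=> th_ge0 th_sum1 g_gt0; set r := rho (th (I x)) => r_ge0.
have gr_gt0 : 0 < 1 + g * r by nra.
have c_ge0 : 0 <= g * r ^+ 2 / (1 + g * r).
  by rewrite divr_ge0 ?mulr_ge0 ?sqr_ge0 // ltW.
rewrite /stratified_remainder eucl_normZ normrN ger0_norm //.
rewrite mulrAC [leRHS]mulrC; apply: ler_pM.
- by apply: divr_ge0; [exact: c_ge0 | exact: ltW].
- exact: sqrtr_ge0.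
- have -> : g * r ^+ 2 / (1 + g * r) / g = r ^+ 2 / (1 + g * r).
    by field; rewrite (gt_eqF gr_gt0) (gt_eqF g_gt0).
  by rewrite ler_pdivrMr // ler_peMr ?sqr_ge0 // lerDl mulr_ge0 // ltW.
- exact: eucl_norm_indicator_sub_le.
Qed.

End StratifiedStep.

Lemma lee_EFin_sqr (R : realType) (r : R) (s : \bar R) :
  0 <= r -> (r%:E <= s)%E -> ((r ^+ 2)%:E <= s * s)%E.
Proof.
move=> r_ge0; case: s => [s||] /=.
- by rewrite -EFinM !lee_fin expr2 => rs; apply: ler_pM.
- by rewrite mulyy !leey.
- by rewrite leNgt ltNyr.
Qed.

Theorem lemma3p2 (R : realType) (dT : measure_display) (T : measurableType dT)
  (d : nat) (hd : (1 < d)%N) (I : T -> 'I_d)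
  (hI : forall i : 'I_d, measurable (I @^-1` [set i]))
  (rho : R -> R) (hrho_meas : measurable_fun (`]0, 1[ : set R) rho)
  (hrho_pos : forall u : R, 0 < u < 1 -> 0 < rho u)
  (tt : nat -> 'I_d -> R) (X : nat -> T) (gamma : nat -> R)
  (htt_pos : forall n i, 0 < tt n i)
  (hgamma : forall n, 0 < gamma n.+1)
  (hrec : forall n i, tt n.+1 i =
     tt n i * (1 + gamma n.+1 * (rho (normalize (tt n) i) / normalize (tt n) i)
                   * strat_ind R I i (X n.+1))) :
  exists Lambda : nat -> 'I_d -> R,
    (forall n i, normalize (tt n.+1) i =
        normalize (tt n) i + gamma n.+1 * Hfun I rho (X n.+1) (normalize (tt n)) i
        + gamma n.+1 * Lambda n.+1 i) /\
    (ereal_sup (range (fun n : nat => (eucl_norm (Lambda n.+1) / gamma n.+1)%R%:E))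
      <= (Num.sqrt (2 : R))%:E *
         (ereal_sup ((fun u : R => (rho u)%:E) @` ([set` `]0, 1[%R] : set R))
          * ereal_sup ((fun u : R => (rho u)%:E) @` ([set` `]0, 1[%R] : set R))))%E.
Proof.
have theta_in01 n : 0 < normalize (tt n) (I (X n.+1)) < 1.
  by rewrite normalize_gt0 ?normalize_lt1.
have rho_ge0 n : 0 <= rho (normalize (tt n) (I (X n.+1))).
  exact/ltW/hrho_pos/theta_in01.
exists (fun m => stratified_remainder I rho (gamma m) (X m) (normalize (tt m.-1))).
split=> [n|]; first exact: normalize_stratified_step (htt_pos n) (hgamma n)
                                                     (rho_ge0 n) (hrec n).
apply: ge_ereal_sup => _ [n _ <-] /=.
apply: le_trans (_ : ((Num.sqrt 2 * rho (normalize (tt n) (I (X n.+1))) ^+ 2)%:E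
                      <= _)%E).
  rewrite lee_fin.
  apply: eucl_norm_stratified_remainder_le _ _ (hgamma n) (rho_ge0 n).
  - by move=> i; exact/ltW/normalize_gt0.
  - exact: sum_normalize (htt_pos n) (I (X n.+1)).
rewrite EFinM lee_wpmul2l ?lee_fin ?sqrtr_ge0 //.
apply: lee_EFin_sqr => //; apply: ereal_sup_ubound.
by exists (normalize (tt n) (I (X n.+1))); rewrite //= in_itv /= theta_in01.
Qed.
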